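(* Let $K\ge2$, $0<q<p$ with $p+(K-1)q=1$, and $\phi\in\Delta$ with $\phi_1\le\cdots\le\phi_K$. If $\theta$ is an MLE for $\phi$, then there exists $n\in\{0,\dots,K-1\}$ such that $\theta=\theta^{[n]}$.
   Context: $\Delta=\{\theta\in\mathbb{R}^K:\theta_i\ge0,\sum_i\theta_i=1\}$. $\mathcal{M}(\theta)_y=q+(p-q)\theta_y$. $\theta\in\Delta$ is an MLE for $\phi$ if it minimizes $D_{KL}(\phi,\mathcal{M}(\theta))=\sum_i\phi_i\log(\phi_i/\mathcal{M}(\theta)_i)$ (convention $0\log(0/\cdot)=0$) over $\Delta$. For sorted $\phi$ and $n\in\{0,\dots,K-1\}$: $\lambda^{[n]}=\frac{(p-q)\sum_{i>n}\phi_i}{1-nq}$, and $\theta^{[n]}\in\mathbb{R}^K$ is given by $\theta^{[n]}_i=0$ for $i\le n$ and $\theta^{[n]}_i=\frac{\phi_i}{\lambda^{[n]}}-\frac{q}{p-q}$ for $i>n$. *)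

From HB Require Import structures.
From mathcomp Require Import all_boot all_order all_algebra.
From mathcomp Require Import all_classical all_reals all_analysis.
Set Implicit Arguments. Unset Strict Implicit. Unset Printing Implicit Defensive.
Import Order.TTheory GRing.Theory Num.Theory.
Local Open Scope ring_scope.

(* Coordinates are indexed by 'I_K = {0,...,K-1}; paper index i (1-based)
   corresponds to ordinal i-1. *)

Definition in_simplex (R : realType) (K : nat) (theta : 'I_K -> R) : Prop :=
  (forall i, 0 <= theta i) /\ \sum_(i < K) theta i = 1.

Definition Mmodel (R : realType) (K : nat) (p q : R) (theta : 'I_K -> R) : 'I_K -> R :=
  fun y => q + (p - q) * theta y.

Definition KL (R : realType) (K : nat) (phi m : 'I_K -> R) : R :=
  \sum_(i < K) (if phi i == 0 then 0 else phi i * ln (phi i / m i)).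

Definition is_MLE (R : realType) (K : nat) (p q : R) (phi theta : 'I_K -> R) : Prop :=
  in_simplex theta /\
  forall theta' : 'I_K -> R, in_simplex theta' ->
    KL phi (Mmodel p q theta) <= KL phi (Mmodel p q theta').

(* lambda^[n] = (p - q) * sum_{i > n} phi_i / (1 - n q)   (paper indices 1-based:
   i > n  <->  ordinal i >= n). *)
Definition lambdaN (R : realType) (K : nat) (p q : R) (phi : 'I_K -> R) (n : nat) : R :=
  (p - q) * (\sum_(i < K | (n <= i)%N) phi i) / (1 - n%:R * q).

Definition thetaN (R : realType) (K : nat) (p q : R) (phi : 'I_K -> R) (n : nat) : 'I_K -> R :=
  fun i => if (i < n)%N then 0 else phi i / lambdaN p q phi n - q / (p - q).

From HB Require Import structures.
From mathcomp Require Import all_boot all_order all_algebra.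
From mathcomp Require Import all_classical all_reals all_analysis.
From mathcomp Require Import ring lra.
Import Order.TTheory GRing.Theory Num.Theory.
Local Open Scope ring_scope.

(* Write m = M(theta). Moving a small mass from coordinate j to coordinate i
   changes D_KL(phi, m) by at most a quantity whose sign is that of
   phi_j m_i - phi_i m_j (by ln x <= x - 1), so at an MLE the ratio phi_i / m_i
   takes its maximal value c > 0 on the whole support of theta. As phi is
   sorted and m_k = q off the support, the support is a final segment
   {n, ..., K-1}. Summing phi_k = c m_k over it gives lambda^[n] = (p - q) c,
   and solving phi_k = c (q + (p - q) theta_k) for theta_k gives theta^[n]. *)

Lemma exists_small_step {R : realFieldType} {t G S : R} :
  0 < t -> 0 < G -> 0 <= S -> exists2 d, 0 < d <= t & d * S < G.
Proof.
move=> t0 G0 S0; set u := G / (S + 1).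
have S1 : 0 < S + 1 by lra.
have u0 : 0 < u by rewrite divr_gt0.
have uS : u * S < G by rewrite /u mulrAC ltr_pdivrMr //; nra.
exists (Num.min t u); first by rewrite lt_min t0 u0 ge_min lexx.
by apply: le_lt_trans uS; rewrite ler_wpM2r // ge_min lexx orbT.
Qed.

Section KL_perturbation.
Local Set Implicit Arguments.
Local Unset Strict Implicit.
Variables (R : realType) (K : nat) (phi : 'I_K -> R).
Hypothesis phi_ge0 : forall k, 0 <= phi k.

Lemma KL_sub_le (m m' : 'I_K -> R) :
  (forall k, 0 < m k) -> (forall k, 0 < m' k) ->
  KL phi m' - KL phi m <= \sum_(k < K) phi k * (m k / m' k - 1).
Proof.
move=> m0 m'0; rewrite /KL -sumrB; apply: ler_sum => k _.
have [->|phik] := eqVneq (phi k) 0; first by rewrite subrr mul0r.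
have phik0 : 0 < phi k by rewrite lt_def phik phi_ge0.
rewrite -mulrBr ler_wpM2l // !ln_div ?posrE ?divr_gt0 //.
have -> : ln (phi k) - ln (m' k) - (ln (phi k) - ln (m k)) = ln (m k / m' k).
  by rewrite ln_div ?posrE //; ring.
have := @le_ln1Dx R (m k / m' k - 1); rewrite addrCA subrr addr0; apply.
by have := divr_gt0 (m0 k) (m'0 k); lra.
Qed.

Lemma KL_shift_lt (m m' : 'I_K -> R) (i j : 'I_K) (d : R) :
  (forall k, 0 < m k) -> (forall k, 0 < m' k) ->
  i != j -> 0 < d -> m' i = m i + d -> m' j = m j - d ->
  (forall k, k != i -> k != j -> m' k = m k) ->
  d * (phi i + phi j) < phi i * m j - phi j * m i ->
  KL phi m' < KL phi m.
Proof.
move=> m0 m'0 ij d0 m'i m'j m'k gap; rewrite -subr_lt0.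
apply: le_lt_trans (KL_sub_le m0 m'0) _.
rewrite (bigD1 i) //= (bigD1 j) 1?eq_sym //= big1 ?addr0 => [|k /andP[ki kj]]; last first.
  by rewrite m'k // divff ?subrr ?mulr0 // gt_eqF.
have := m'0 i; have := m'0 j; rewrite m'i m'j => mjd mid.
have -> : phi i * (m i / (m i + d) - 1) + phi j * (m j / (m j - d) - 1)
    = d * (d * (phi i + phi j) - (phi i * m j - phi j * m i)) / ((m i + d) * (m j - d)).
  by field; rewrite !gt_eqF.
by rewrite pmulr_llt0 ?invr_gt0 ?mulr_gt0 // pmulr_rlt0 // subr_lt0.
Qed.

End KL_perturbation.

Definition shift_mass {R : pzRingType} {K : nat} (theta : 'I_K -> R) (i j : 'I_K) (e : R) :
  'I_K -> R :=
  fun k => theta k + (if k == i then e else 0) - (if k == j then e else 0).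

Section Simplex.
Local Set Implicit Arguments.
Local Unset Strict Implicit.
Variables (R : realType) (K : nat).

Lemma in_simplex_shift_mass (theta : 'I_K -> R) (i j : 'I_K) (e : R) :
  in_simplex theta -> i != j -> 0 <= e <= theta j -> in_simplex (shift_mass theta i j e).
Proof.
move=> [th0 thS] ij /andP[e0 ej]; split=> [k|].
  rewrite /shift_mass; have := th0 k.
  case: eqVneq => [->|_]; first by rewrite (negbTE ij); lra.
  by case: eqVneq => [->|_]; lra.
by rewrite /shift_mass sumrB big_split /= thS -!big_mkcond /= !big_pred1_eq; ring.
Qed.

Lemma in_simplex_exists_gt0 (theta : 'I_K -> R) : in_simplex theta -> exists j, 0 < theta j.
Proof.
move=> [th0 thS]; case: (pickP [pred j | 0 < theta j]) => [j thj|none]; first by exists j.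
move: thS; rewrite big1 => [/eqP|k _]; first by rewrite eq_sym oner_eq0.
by apply/eqP; rewrite eq_le th0 andbT leNgt; exact: negbT (none k).
Qed.

Lemma Mmodel_shift_mass (p q : R) (theta : 'I_K -> R) (i j k : 'I_K) (e : R) :
  Mmodel p q (shift_mass theta i j e) k = Mmodel p q theta k
    + (if k == i then (p - q) * e else 0) - (if k == j then (p - q) * e else 0).
Proof. by rewrite /Mmodel /shift_mass; case: eqP; case: eqP => _ _; ring. Qed.

End Simplex.

Section MaximumLikelihood.
Local Set Implicit Arguments.
Local Unset Strict Implicit.
Variables (R : realType) (K : nat) (p q : R).
Hypotheses (q_gt0 : 0 < q) (q_lt_p : q < p).

Lemma Mmodel_gt0 (theta : 'I_K -> R) (k : 'I_K) : 0 <= theta k -> 0 < Mmodel p q theta k.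
Proof.
by move=> thk; rewrite /Mmodel ltr_pwDl // mulr_ge0 // subr_ge0 ltW.
Qed.

Variables (phi theta : 'I_K -> R).
Hypotheses (phi_simplex : in_simplex phi) (theta_MLE : is_MLE p q phi theta).

Lemma MLE_ratio_le (i j : 'I_K) :
  0 < theta j -> phi i * Mmodel p q theta j <= phi j * Mmodel p q theta i.
Proof.
have [phi0 _] := phi_simplex; have [[th0 thS] opt] := theta_MLE => thj.
have [<-|ij] := eqVneq i j; first by rewrite mulrC.
rewrite leNgt; apply/negP; rewrite -subr_gt0 => gap.
have pq0 : 0 < p - q by rewrite subr_gt0.
have [d /andP[d0 dj] dgap] :=
  exists_small_step (mulr_gt0 pq0 thj) gap (addr_ge0 (phi0 i) (phi0 j)).
set theta' := shift_mass theta i j (d / (p - q)).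
have s' : in_simplex theta'.
  apply: in_simplex_shift_mass => //; apply/andP; split.
    by rewrite divr_ge0 // ltW.
  by rewrite ler_pdivrMr // mulrC.
have m'E k : Mmodel p q theta' k
    = Mmodel p q theta k + (if k == i then d else 0) - (if k == j then d else 0).
  by rewrite Mmodel_shift_mass [(p - q) * _]mulrC divfK // gt_eqF.
have := opt theta' s'; rewrite leNgt => /negP; apply.
apply: (KL_shift_lt phi0 _ _ ij d0) => //.
- by move=> k; apply: Mmodel_gt0.
- by move=> k; apply: Mmodel_gt0; case: s'.
- by rewrite m'E eqxx (negbTE ij) subr0.
- by rewrite m'E eqxx eq_sym (negbTE ij) addr0.
- by move=> k ki kj; rewrite m'E (negbTE ki) (negbTE kj) addr0 subr0.
Qed.

Lemma MLE_proportional : exists c, [/\ 0 < c,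
  forall i, phi i <= c * Mmodel p q theta i &
  forall i, 0 < theta i -> phi i = c * Mmodel p q theta i].
Proof.
have [[th0 _] _] := theta_MLE.
have m0 i : 0 < Mmodel p q theta i by exact: Mmodel_gt0.
have [j thj] := in_simplex_exists_gt0 theta_MLE.1.
pose c := phi j / Mmodel p q theta j.
have phi_le i : phi i <= c * Mmodel p q theta i.
  by rewrite mulrAC ler_pdivlMr //; exact: MLE_ratio_le.
exists c; split=> // [|i thi].
  have [i phii] := in_simplex_exists_gt0 phi_simplex.
  by have := lt_le_trans phii (phi_le i); rewrite pmulr_lgt0.
apply/eqP; rewrite eq_le phi_le mulrAC ler_pdivrMr //; exact: MLE_ratio_le.
Qed.

Hypothesis phi_sorted : forall i j : 'I_K, (i <= j)%N -> phi i <= phi j.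

(* Off the support m_k = q, while phi_i / c = q + (p - q) theta_i > q on it. *)
Lemma MLE_support_upclosed (i k : 'I_K) : 0 < theta i -> (i <= k)%N -> 0 < theta k.
Proof.
have [[th0 _] _] := theta_MLE; have [c [c0 phi_le phi_eq]] := MLE_proportional.
move=> thi ik; rewrite lt_def th0 andbT; apply/negP => /eqP thk.
have := phi_le k; have := phi_sorted ik; rewrite phi_eq // /Mmodel thk mulr0 addr0.
have : 0 < c * ((p - q) * theta i) by rewrite !mulr_gt0 // subr_gt0.
rewrite mulrDr; lra.
Qed.

End MaximumLikelihood.

Lemma ord_final_segment {K : nat} {P : pred 'I_K} :
  (exists i, P i) -> (forall i k : 'I_K, P i -> (i <= k)%N -> P k) ->
  exists2 n, (n < K)%N & forall k : 'I_K, P k = (n <= k)%N.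
Proof.
move=> [i0 Pi0] up; case: (arg_minnP val Pi0) => n Pn nmin.
by exists n => // k; apply/idP/idP => [/nmin|]; last exact: up.
Qed.

Lemma sumr_const_final_segment (V : nmodType) (K n : nat) (x : V) :
  \sum_(k < K | (n <= k)%N) x = x *+ (K - n).
Proof.
by rewrite -(big_geq_mkord _ _ xpredT (fun=> x)) sumr_const_nat.
Qed.

Lemma sum_Mmodel_final_segment {R : realType} {K : nat} (n : nat) (p q : R)
    (theta : 'I_K -> R) :
  in_simplex theta -> (forall k : 'I_K, (k < n)%N -> theta k = 0) ->
  \sum_(k < K | (n <= k)%N) Mmodel p q theta k = (p - q) + (K - n)%:R * q.
Proof.
move=> [_ thS] th_below.
have th_tail : \sum_(k < K | (n <= k)%N) theta k = 1.
  rewrite -thS [RHS](bigID (fun k : 'I_K => (n <= k)%N)) /= [X in _ = _ + X]big1 ?addr0 //.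
  by move=> k; rewrite -ltnNge; exact: th_below.
by rewrite big_split /= -mulr_sumr th_tail sumr_const_final_segment mulr_natl addrC mulr1.
Qed.

Lemma one_sub_mulnq {R : realType} {K n : nat} {p q : R} :
  (1 <= K)%N -> (n <= K)%N -> p + (K - 1)%:R * q = 1 ->
  1 - n%:R * q = (p - q) + (K - n)%:R * q.
Proof.
move=> K1 nK; rewrite (natrB _ K1) (natrB _ nK) => h.
by rewrite -[X in X - _ = _]h; ring.
Qed.

Theorem lemma2 (R : realType) (K : nat) (p q : R) (phi theta : 'I_K -> R) :
  (2 <= K)%N -> 0 < q -> q < p -> p + (K - 1)%:R * q = 1 ->
  in_simplex phi ->
  (forall i j : 'I_K, (i <= j)%N -> phi i <= phi j) ->
  is_MLE p q phi theta ->
  exists n : nat, (n < K)%N /\ theta = thetaN p q phi n.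
Proof.
move=> K2 q0 qp hsum phiS phi_sorted mle.
have [[th0 _] _] := mle.
have [c [c0 _ phi_eq]] := MLE_proportional q0 qp phiS mle.
have [n nK supp] := ord_final_segment (in_simplex_exists_gt0 mle.1)
  (MLE_support_upclosed q0 qp phiS mle phi_sorted).
have th_below (k : 'I_K) : (k < n)%N -> theta k = 0.
  by move=> kn; apply/eqP; rewrite eq_le th0 andbT leNgt supp -ltnNge.
have pq0 : 0 < p - q by rewrite subr_gt0.
have tail : 1 - n%:R * q = (p - q) + (K - n)%:R * q.
  by apply: one_sub_mulnq hsum; [exact: ltnW | exact: ltnW].
have tail0 : 0 < 1 - n%:R * q by rewrite tail ltr_pwDl // mulr_ge0 // ltW.
have lam : lambdaN p q phi n = (p - q) * c.
  rewrite /lambdaN (eq_bigr (fun k => c * Mmodel p q theta k)) => [|k nk]; last first.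
    by apply: phi_eq; rewrite supp.
  rewrite -mulr_sumr (sum_Mmodel_final_segment n p q _ mle.1 th_below) -tail.
  by field; rewrite gt_eqF.
exists n; split => //; apply/funext => k; rewrite /thetaN.
case: ltnP => [/th_below //|kn].
by rewrite lam phi_eq ?supp // /Mmodel; field; rewrite (gt_eqF pq0) (gt_eqF c0).
Qed.
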